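(* Let $n\ge1$, $\mathcal{K}=\{\texttt{a},\texttt{b}\}$, $\epsilon\ge0$ and $p=e^\epsilon/(1+e^\epsilon)$. For the uniform prior $\pi$ on $\mathcal{K}^n$ and the single-target gain function $g_{\rm T}$, $$V_{\rm T}[\pi\triangleright\mathbf{N}\mathbf{S}]=\frac{1}{2^n}\sum_{i=0}^{n}\binom{n}{i}\frac{\max(i,n-i)\,p+\min(i,n-i)(1-p)}{n}.$$
   Context: A dataset is $x=(x_0,\dots,x_{n-1})\in\mathcal{K}^n$; its histogram $h(x)$ is the map $\kappa\mapsto|\{i:x_i=\kappa\}|$; $\#z$ is the number of datasets with histogram $z$. Full $k$-RR channel (with $k=2$) $\mathbf{N}:\mathcal{K}^n\to\mathcal{K}^n$: $\mathbf{N}_{x,y}=\prod_{i}q(y_i\mid x_i)$, $q(b\mid a)=p$ if $b=a$, $1-p$ otherwise. Shuffle channel $\mathbf{S}:\mathcal{K}^n\to\mathcal{K}^n$: $\mathbf{S}_{x,y}=1/\#h(x)$ if $h(y)=h(x)$, else $0$. $\mathbf{N}\mathbf{S}$ is the matrix product. Uniform prior $\pi_x=1/2^n$. Single-target gain function: $\mathcal{W}=\mathcal{K}$, $g_{\rm T}(w,x)=1$ if $x_0=w$, else $0$. Posterior vulnerability: $V_{\rm T}[\pi\triangleright\mathbf{C}]=\sum_{y}\max_{w}\sum_{x}\pi_x\mathbf{C}_{x,y}g_{\rm T}(w,x)$. *)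

From HB Require Import structures.
From mathcomp Require Import all_boot all_order all_algebra.
From mathcomp Require Import all_classical all_reals.
From mathcomp Require Import sequences exp.
Set Implicit Arguments. Unset Strict Implicit. Unset Printing Implicit Defensive.
Import Order.TTheory GRing.Theory Num.Theory.
Local Open Scope ring_scope.

(* The alphabet K = {a, b} is encoded as bool (a := false, b := true).
   A dataset of size n is an n-tuple over K. *)
Notation dataset n := (n.-tuple bool).

Definition hist n (x : dataset n) : {ffun bool -> nat} :=
  [ffun k => count_mem k x].

Definition nhist n (z : {ffun bool -> nat}) : nat :=
  #|[set y : dataset n | hist y == z]|.

Definition krr (R : ringType) (p : R) (a b : bool) : R :=
  if b == a then p else 1 - p.

Definition Nch (R : ringType) (p : R) n (x y : dataset n) : R :=
  \prod_(i < n) krr p (tnth x i) (tnth y i).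

Definition Sch (R : fieldType) n (x y : dataset n) : R :=
  if hist y == hist x then (nhist n (hist x))%:R^-1 else 0.

Definition mulch (R : ringType) n (A B : dataset n -> dataset n -> R)
  (x y : dataset n) : R := \sum_(z : dataset n) A x z * B z y.

Definition uprior (R : fieldType) n (x : dataset n) : R := (2 ^ n)%:R^-1.

Definition gT (R : ringType) n (w : bool) (x : dataset n) : R :=
  if nth false x 0 == w then 1 else 0.

Definition VT (R : realFieldType) n (pi : dataset n -> R)
  (C : dataset n -> dataset n -> R) : R :=
  \sum_(y : dataset n) \big[Num.max/0]_(w : bool)
     \sum_(x : dataset n) pi x * C x y * gT R w x.

From HB Require Import structures.
From mathcomp Require Import all_boot all_order all_algebra.
From mathcomp Require Import all_classical all_reals.
From mathcomp Require Import sequences exp.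
From mathcomp Require Import ring lra.
Set Implicit Arguments.
Unset Strict Implicit.
Unset Printing Implicit Defensive.

Import Order.TTheory GRing.Theory Num.Theory.
Local Open Scope ring_scope.

(* Since q is symmetric, the columns of N sum to 1, so summing the target gain
   over the input x leaves sum_x N_{x,z} [x_0 = w] = q(z_0 | w).  The shuffle
   spreads y uniformly over the C(n, k) datasets z with the same number k of
   b's, and a fraction k / n of them has z_0 = b.  Hence the column y
   contributes 2^-n max_w (k q(b | w) + (n - k) q(a | w)) / n, which equals
   2^-n (max(k, n-k) p + min(k, n-k) (1 - p)) / n because p >= 1/2; finally
   C(n, k) outputs y have k b's. *)

Lemma big_tuple_cons (R : Type) (idx : R) (op : Monoid.com_law idx)
    (T : finType) m (F : m.+1.-tuple T -> R) :
  \big[op/idx]_x F x =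
  \big[op/idx]_(a : T) \big[op/idx]_(t : m.-tuple T) F [tuple of a :: t].
Proof.
rewrite pair_big (reindex (fun q : T * m.-tuple T => [tuple of q.1 :: q.2])) //=.
exists (fun x => (thead x, [tuple of behead x])) => [[a t] _ | x _].
- by congr pair; apply: val_inj.
- by rewrite /= -tuple_eta.
Qed.

Lemma count_tuple_le (T : Type) m (a : pred T) (t : m.-tuple T) : (count a t <= m)%N.
Proof. by rewrite -[X in (_ <= X)%N](size_tuple t) count_size. Qed.

Lemma sum_count_mem_eq m k :
  (\sum_(z : m.-tuple bool) (count_mem true z == k) = 'C(m, k))%N.
Proof.
elim: m k => [|m IHm] k.
  rewrite (eq_bigr (fun=> nat_of_bool (0 == k)%N)) => [|t _]; last by rewrite tuple0.
  by rewrite sum_nat_const card_tuple expn0 mul1n bin0n eq_sym.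
rewrite big_tuple_cons big_bool /=.
under eq_bigr do rewrite add1n.
under [X in (_ + X)%N]eq_bigr do rewrite add0n.
rewrite IHm; case: k => [|k].
  by rewrite big1 ?bin0.
under eq_bigr do rewrite eqSS.
by rewrite IHm binS addnC.
Qed.

Lemma sum_count_mem (V : nmodType) m (F : nat -> V) :
  \sum_(z : m.-tuple bool) F (count_mem true z) = \sum_(i < m.+1) F i *+ 'C(m, i).
Proof.
transitivity (\sum_(z : m.-tuple bool) \sum_(i < m.+1) F i *+ (i == count_mem true z :> nat)).
  apply: eq_bigr => z _; under eq_bigr do rewrite mulrb.
  by rewrite -big_mkcond big_ord1_eq ltnS count_tuple_le.
rewrite exchange_big; apply: eq_bigr => i _.
under eq_bigr do rewrite eq_sym.
by rewrite sumrMnr sum_count_mem_eq.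
Qed.

(* Multiplied out by m.+1 to avoid the junk value 'C(m, k.-1) at k = 0. *)
Lemma sum_count_mem_cons m k (b : bool) :
  (m.+1 * \sum_(t : m.-tuple bool) (count_mem true (b :: t) == k) =
   (if b then k else m.+1 - k) * 'C(m.+1, k))%N.
Proof.
case: b => /=.
  under eq_bigr do rewrite add1n.
  case: k => [|k]; first by rewrite big1 ?muln0.
  under eq_bigr do rewrite eqSS.
  by rewrite sum_count_mem_eq mul_bin_diag.
under eq_bigr do rewrite add0n.
by rewrite sum_count_mem_eq (mul_bin_down m.+1).
Qed.

Lemma count_mem_false m (z : m.-tuple bool) :
  count_mem false z = (m - count_mem true z)%N.
Proof.
have := count_predC (pred1 true) z; rewrite size_tuple => count_size.
by rewrite -[X in (X - _)%N]count_size addKn; apply: eq_count => -[].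
Qed.

Lemma hist_eqE m (z y : m.-tuple bool) :
  (hist z == hist y) = (count_mem true z == count_mem true y).
Proof.
apply/eqP/eqP => [/ffunP/(_ true)|eq_zy]; first by rewrite !ffunE.
by apply/ffunP => -[]; rewrite !ffunE // !count_mem_false eq_zy.
Qed.

Lemma nhist_hist m (y : m.-tuple bool) : nhist m (hist y) = 'C(m, count_mem true y).
Proof.
rewrite /nhist -sum1dep_card -sum_count_mem_eq big_mkcond /=.
by apply: eq_bigr => z _; rewrite hist_eqE; case: eqP.
Qed.

Lemma SchE (R : fieldType) m (z y : m.-tuple bool) :
  Sch R z y = (count_mem true z == count_mem true y)%:R / 'C(m, count_mem true y)%:R.
Proof.
rewrite /Sch eq_sym hist_eqE nhist_hist.
by case: eqP => [->|_]; rewrite ?mul1r ?mul0r.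
Qed.

Lemma Nch_cons (R : ringType) (p : R) m (b c : bool) (t s : m.-tuple bool) :
  Nch p [tuple of b :: t] [tuple of c :: s] = krr p b c * Nch p t s.
Proof.
rewrite /Nch big_ord_recl; congr (_ * _).
by apply: eq_bigr => i _; rewrite !(tnth_nth false).
Qed.

Lemma sum_krr_l (R : ringType) (p : R) (c : bool) : \sum_b krr p b c = 1.
Proof. by rewrite big_bool /krr; case: c => /=; rewrite ?[p + _]addrC subrK. Qed.

Lemma sum_Nch_l (R : ringType) (p : R) m (s : m.-tuple bool) :
  \sum_(t : m.-tuple bool) Nch p t s = 1.
Proof.
elim: m s => [|m IHm] s.
  rewrite (eq_bigr (fun=> 1)) => [|t _]; last by rewrite /Nch big_ord0.
  by rewrite sumr_const card_tuple.
rewrite (tuple_eta s) big_tuple_cons -(sum_krr_l p (thead s)).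
apply: eq_bigr => b _; under eq_bigr do rewrite Nch_cons.
by rewrite -mulr_sumr IHm mulr1.
Qed.

Lemma sum_Nch_gT (R : ringType) (p : R) m (z : m.+1.-tuple bool) (w : bool) :
  \sum_x Nch p x z * gT R w x = krr p w (thead z).
Proof.
rewrite (tuple_eta z) big_tuple_cons (bigD1 w) //= theadE.
rewrite [X in _ + X]big1 => [|b /negbTE neq_bw]; last first.
  by apply: big1 => t _; rewrite /gT /= neq_bw mulr0.
under eq_bigr do rewrite Nch_cons /gT /= eqxx mulr1.
by rewrite -mulr_sumr sum_Nch_l mulr1 addr0.
Qed.

Lemma sum_uprior_mulch_Nch (R : fieldType) (p : R) m
    (C : m.+1.-tuple bool -> m.+1.-tuple bool -> R) (y : m.+1.-tuple bool) (w : bool) :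
  \sum_x uprior R x * mulch (@Nch R p m.+1) C x y * gT R w x =
  (2 ^ m.+1)%:R^-1 * \sum_z C z y * krr p w (thead z).
Proof.
under eq_bigr do rewrite /uprior /mulch mulr_sumr mulr_suml.
rewrite exchange_big mulr_sumr; apply: eq_bigr => z _.
rewrite -sum_Nch_gT !mulr_sumr; apply: eq_bigr => x _.
by rewrite -!mulrA [Nch p x z * (_ * _)]mulrCA.
Qed.

Lemma sum_Sch_thead (R : numFieldType) m (y : m.+1.-tuple bool) (f : bool -> R) :
  let k := count_mem true y in
  \sum_z Sch R z y * f (thead z) =
  (k%:R * f true + (m.+1 - k)%N%:R * f false) / m.+1%:R.
Proof.
move=> k; have k_le : (k <= m.+1)%N by exact: count_tuple_le.
have C_neq0 : 'C(m.+1, k)%:R != 0 :> R by rewrite pnatr_eq0 -lt0n bin_gt0.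
have n_neq0 : m.+1%:R != 0 :> R by rewrite pnatr_eq0.
have count_cons b : \sum_(t : m.-tuple bool) (count_mem true (b :: t) == k)%:R =
    (if b then k else m.+1 - k)%N%:R * 'C(m.+1, k)%:R / m.+1%:R :> R.
  rewrite -natr_sum -natrM -sum_count_mem_cons natrM.
  by rewrite mulrC mulKf.
under eq_bigr do rewrite SchE -mulrA -/k.
rewrite big_tuple_cons.
under eq_bigr do under eq_bigr do rewrite theadE.
under eq_bigr do rewrite -mulr_suml count_cons.
rewrite big_bool /=.
by field; rewrite nat1r n_neq0 C_neq0.
Qed.

Lemma bigmax_bool (R : realDomainType) (F : bool -> R) :
  0 <= F false -> \big[Num.max/0]_b F b = Num.max (F true) (F false).
Proof.
by move=> F_ge0; rewrite unlock /index_enum /= unlock /= (max_l F_ge0).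
Qed.

Lemma maxr_mix_swap (R : realDomainType) (p : R) (a b : nat) : 1 - p <= p ->
  Num.max (a%:R * p + b%:R * (1 - p)) (a%:R * (1 - p) + b%:R * p) =
  (maxn a b)%:R * p + (minn a b)%:R * (1 - p).
Proof.
move=> p_half; case: leqP => [le_ab | lt_ba].
  have le_ab_R : a%:R <= b%:R :> R by rewrite ler_nat.
  by rewrite max_r; [rewrite addrC | nra].
have le_ba_R : b%:R <= a%:R :> R by rewrite ler_nat ltnW.
by rewrite max_l //; nra.
Qed.

Lemma odds_prob_bounds (R : realFieldType) (e : R) :
  1 <= e -> 0 <= 1 - e / (1 + e) <= e / (1 + e).
Proof.
move=> e_ge1; have pos : 0 < 1 + e by lra.
have -> : 1 - e / (1 + e) = (1 + e)^-1 by field; rewrite gt_eqF.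
by rewrite invr_ge0 ltW //= -[X in X <= _]mul1r ler_pM2r ?invr_gt0.
Qed.

Lemma bigmax_posterior_NS (R : realFieldType) (p : R) m (y : m.+1.-tuple bool) :
  0 <= 1 - p <= p ->
  let k := count_mem true y in
  \big[Num.max/0]_w
     \sum_x uprior R x * mulch (@Nch R p m.+1) (@Sch R m.+1) x y * gT R w x =
  (2 ^ m.+1)%:R^-1 *
    (((maxn k (m.+1 - k))%:R * p + (minn k (m.+1 - k))%:R * (1 - p)) / m.+1%:R).
Proof.
move=> /andP[q_ge0 q_le_p] k.
under eq_bigr do rewrite sum_uprior_mulch_Nch sum_Sch_thead /krr -/k.
rewrite bigmax_bool /=.
  by rewrite -maxr_pMr ?invr_ge0 ?ler0n // -maxr_pMl ?invr_ge0 ?ler0n // maxr_mix_swap.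
have p_ge0 : 0 <= p by lra.
apply/mulr_ge0/divr_ge0; rewrite ?invr_ge0 ?ler0n //.
by apply: addr_ge0; apply: mulr_ge0; rewrite ?ler0n.
Qed.

Theorem mainTheorem11 (R : realType) (n : nat) (eps : R) :
  (0 < n)%N -> 0 <= eps ->
  let p := expR eps / (1 + expR eps) in
  VT (@uprior R n) (mulch (@Nch R p n) (@Sch R n)) =
  (2 ^ n)%:R^-1 * \sum_(i < n.+1)
     'C(n, i)%:R * (((maxn i (n - i))%:R * p + (minn i (n - i))%:R * (1 - p))
                    / n%:R).
Proof.
move=> n_gt0 eps_ge0 p; case: n n_gt0 => // m _.
have p_bounds : 0 <= 1 - p <= p.
  by apply: odds_prob_bounds; have := expR_ge1Dx eps; lra.
rewrite /VT; under eq_bigr do rewrite bigmax_posterior_NS //.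
rewrite -mulr_sumr (sum_count_mem _ (fun k =>
  ((maxn k (m.+1 - k))%:R * p + (minn k (m.+1 - k))%:R * (1 - p)) / m.+1%:R : R)).
by under [in RHS]eq_bigr do rewrite mulr_natl.
Qed.
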